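(* Let $V$ be a finite-dimensional vector space over $\Bbbk$ and let $\mathcal E\subset\operatorname{End}(V)$ be a linear subspace which is a semigroup (closed under composition and containing $\mathrm{id}_V$). Then $\mathcal E(v)=M(v)=\mathcal D_{\mathcal E}(v)$ for all $v\in V$. In particular, a closed subvariety $Y\subset V$ is $\mathcal D_{\mathcal E}$-invariant if and only if it is $\mathcal E$-stable. Moreover, $\mathcal E(w)=\mathcal E(v)$ for all $w$ in an open neighborhood of $v$ in $\mathcal E(v)$.
   Context: $\Bbbk$ is algebraically closed of characteristic $0$. $\operatorname{End}(V)$ is the set of all polynomial maps $V\to V$. Vector fields on $V$ are identified with polynomial maps $\xi\colon V\to V$, $\xi(v)\in V=T_vV$. $\mathcal D_{\mathcal E}$ is the set of vector fields $v\mapsto\phi(v)$ for $\phi\in\mathcal E$, and $\mathcal D_{\mathcal E}(v)=\{\xi(v)\mid\xi\in\mathcal D_{\mathcal E}\}\subset V$. A closed subvariety $Y\subset V$ is $\mathcal D_{\mathcal E}$-invariant if $\xi(y)\in T_yY$ for all $y\in Y$ and $\xi\in\mathcal D_{\mathcal E}$; $M(v)$ is the smallest closed $\mathcal D_{\mathcal E}$-invariant subvariety containing $v$. $\mathcal E(v)=\{\phi(v)\mid\phi\in\mathcal E\}$; $Y$ is $\mathcal E$-stable if $\phi(Y)\subset Y$ for all $\phi\in\mathcal E$. *)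

From HB Require Import structures.
From mathcomp Require Import all_boot all_order all_algebra.
From mathcomp Require Import mpoly.
Set Implicit Arguments. Unset Strict Implicit. Unset Printing Implicit Defensive.
Import GRing.Theory.
Local Open Scope ring_scope.

Section Defs.
Variables (k : fieldType) (n : nat).
Local Notation V := 'rV[k]_n.
Local Notation P := {mpoly k[n]}.

Definition peval (p : P) (v : V) : k := p.@[fun j => v ord0 j].

(* polynomial maps V -> V (elements of End(V)) *)
Definition polymap (f : V -> V) : Prop :=
  exists F : 'I_n -> P, forall v i, f v ord0 i = peval (F i) v.

Definition lin_semigroup (E : (V -> V) -> Prop) : Prop :=
  (forall f, E f -> polymap f) /\
  E (fun _ => 0) /\
  (forall f g, E f -> E g -> E (fun x => f x + g x)) /\
  (forall (c : k) f, E f -> E (fun x => c *: f x)) /\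
  E id /\
  (forall f g, E f -> E g -> E (f \o g)).

Definition zclosed (Y : V -> Prop) : Prop :=
  exists S : P -> Prop, forall x, Y x <-> (forall p, S p -> peval p x = 0).

Definition zopen_in (X U : V -> Prop) : Prop :=
  exists Z : V -> Prop, zclosed Z /\ forall x, U x <-> (X x /\ ~ Z x).

Definition pdiff (p : P) (y w : V) : k :=
  \sum_(i < n) peval (mderiv i p) y * w ord0 i.

Definition tangent (Y : V -> Prop) (y w : V) : Prop :=
  forall p : P, (forall z, Y z -> peval p z = 0) -> pdiff p y w = 0.

Definition DE (E : (V -> V) -> Prop) : (V -> V) -> Prop :=
  fun xi => exists phi, E phi /\ forall v, xi v = phi v.

Definition DE_at (E : (V -> V) -> Prop) (v : V) : V -> Prop :=
  fun x => exists xi, DE E xi /\ xi v = x.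

Definition Eorbit (E : (V -> V) -> Prop) (v : V) : V -> Prop :=
  fun x => exists phi, E phi /\ phi v = x.

Definition DE_invariant (E : (V -> V) -> Prop) (Y : V -> Prop) : Prop :=
  forall xi y, DE E xi -> Y y -> tangent Y y (xi y).

Definition E_stable (E : (V -> V) -> Prop) (Y : V -> Prop) : Prop :=
  forall phi y, E phi -> Y y -> Y (phi y).

Definition is_M (E : (V -> V) -> Prop) (v : V) (Y : V -> Prop) : Prop :=
  [/\ zclosed Y, DE_invariant E Y, Y v &
      forall Z, zclosed Z -> DE_invariant E Z -> Z v -> forall x, Y x -> Z x].

Definition set_eq (A B : V -> Prop) : Prop := forall x, A x <-> B x.

End Defs.

From HB Require Import structures.
From mathcomp Require Import all_boot all_order all_algebra.
From mathcomp Require Import mpoly zify.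
From Stdlib Require Import Classical IndefiniteDescription.
Set Implicit Arguments. Unset Strict Implicit. Unset Printing Implicit Defensive.
Import GRing.Theory.
Local Open Scope ring_scope.

(* W := E(v) is a linear subspace of V containing v and mapped into itself by
   every element of E.  If Z is closed, D_E-invariant and contains v, then every
   polynomial p vanishing on Z has its derivatives along the vector fields
   x |-> phi(x), phi in E, vanishing on Z again.  For u = phi(v), the directional
   derivative along u at v differs from the derivative along that vector field
   only by terms in which derivatives fall on phi; as phi preserves W these are
   derivatives of p of lower order in directions of W.  By induction on the
   order, all derivatives of p at v in directions of W vanish, so p vanishes on
   v + W = W by Taylor's formula (characteristic 0), i.e. W is contained in Z.
   Conversely W is D_E-invariant, being a subspace containing phi(w) for w in W.
   For the last claim pick phi_1, ..., phi_r in E with phi_i(v) a basis of W;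
   the phi_i(w) stay a basis of W wherever a certain determinant is nonzero. *)

Section Derivations.
Variables (k : fieldType) (n : nat).
Local Notation V := 'rV[k]_n.
Local Notation P := {mpoly k[n]}.

Lemma mpoly_ringind (Q : P -> Prop) :
  (forall c, Q c%:MP) -> (forall i, Q 'X_i) ->
  (forall p q, Q p -> Q q -> Q (p + q)) -> (forall p q, Q p -> Q q -> Q (p * q)) ->
  forall p, Q p.
Proof.
move=> QC QX QD QM; elim/mpolyind => [|c m p _ _ Qp]; first by rewrite -mpolyC0.
apply: (QD _ _ _ Qp); rewrite -mul_mpolyC mpolyXE_id; apply: (QM _ _ (QC c)).
apply: big_ind => [||i _]; [by rewrite -mpolyC1 | exact: (QM) |].
by elim: (m i) => [|e IHe]; rewrite ?expr0 -?mpolyC1 // exprS; apply: (QM).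
Qed.

Definition dderiv (u : V) (p : P) : P := \sum_(i < n) u ord0 i *: mderiv i p.

Lemma dderiv_is_linear u : linear (dderiv u).
Proof.
move=> c p q; rewrite /dderiv scaler_sumr -big_split; apply: eq_bigr => i _.
by rewrite linearP scalerDr !scalerA mulrC.
Qed.

HB.instance Definition _ u :=
  GRing.isLinear.Build k P P _ (dderiv u) (dderiv_is_linear u).

Lemma dderivM u p q : dderiv u (p * q) = dderiv u p * q + p * dderiv u q.
Proof.
rewrite /dderiv mulr_suml mulr_sumr -big_split; apply: eq_bigr => i _.
by rewrite mderivM scalerDr scalerAl scalerAr.
Qed.

Lemma dderivC u c : dderiv u c%:MP = 0.
Proof. by rewrite /dderiv big1 // => i _; rewrite mderivC scaler0. Qed.

Lemma dderivX u j : dderiv u 'X_j = (u ord0 j)%:MP.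
Proof.
rewrite /dderiv (bigD1 j) //= big1 ?addr0 => [|i ne_ij].
  by rewrite mderivX mnm1E eqxx -{1}[U_(j)%MM]add0m addmK mpolyX0 scale1r -alg_mpolyC.
by rewrite mderivX mnm1E eq_sym (negbTE ne_ij) scale0r scaler0.
Qed.

Lemma mderiv_dderiv i u p : mderiv i (dderiv u p) = dderiv u (mderiv i p).
Proof.
rewrite /dderiv raddf_sum; apply: eq_bigr => j _.
by rewrite /= mderivZ mderiv_comm.
Qed.

Lemma dderiv_comm u w p : dderiv u (dderiv w p) = dderiv w (dderiv u p).
Proof.
rewrite {1}/dderiv raddf_sum; apply: eq_bigr => i _.
by rewrite /= linearZ mderiv_dderiv.
Qed.

Definition dderivs (us : seq V) (p : P) : P := foldr dderiv p us.

Lemma dderivs_is_linear us : linear (dderivs us).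
Proof. by elim: us => [//|u us IH] c p q /=; rewrite IH linearP. Qed.

HB.instance Definition _ us :=
  GRing.isLinear.Build k P P _ (dderivs us) (dderivs_is_linear us).

Lemma dderiv_dderivs u us p : dderiv u (dderivs us p) = dderivs us (dderiv u p).
Proof. by elim: us => //= w us <-; rewrite dderiv_comm. Qed.

Lemma dderivs_rcons us u p : dderivs (rcons us u) p = dderivs us (dderiv u p).
Proof. exact: foldr_rcons. Qed.

Definition vderiv (F : 'I_n -> P) (q : P) : P := \sum_(i < n) F i * mderiv i q.

Definition evalmap (F : 'I_n -> P) (x : V) : V := \row_i peval (F i) x.

Lemma dderiv_vderiv u F q :
  dderiv u (vderiv F q) = vderiv (fun i => dderiv u (F i)) q + vderiv F (dderiv u q).
Proof.
rewrite /vderiv raddf_sum -big_split; apply: eq_bigr => i _.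
by rewrite /= dderivM mderiv_dderiv.
Qed.

Lemma pevalD (p q : P) x : peval (p + q) x = peval p x + peval q x.
Proof. exact: raddfD. Qed.

Lemma peval_sum I r (Q : pred I) (G : I -> P) x :
  peval (\sum_(i <- r | Q i) G i) x = \sum_(i <- r | Q i) peval (G i) x.
Proof. exact: raddf_sum. Qed.

Lemma peval_vderiv F q x : peval (vderiv F q) x = peval (dderiv (evalmap F x) q) x.
Proof.
rewrite !peval_sum; apply: eq_bigr => i _.
by rewrite /peval mevalM mevalZ mxE.
Qed.

Lemma pdiffE p y w : pdiff p y w = peval (dderiv w p) y.
Proof.
rewrite peval_sum; apply: eq_bigr => i _.
by rewrite /peval mevalZ mulrC.
Qed.

End Derivations.

Section Lines.
Variables (k : fieldType) (n : nat).
Local Notation V := 'rV[k]_n.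
Local Notation P := {mpoly k[n]}.

Definition line_poly (y u : V) (p : P) : {poly k} :=
  mmap (@polyC k) (fun i => (y ord0 i)%:P + (u ord0 i)%:P * 'X) p.

Lemma horner_line_poly y u p t : (line_poly y u p).[t] = peval p (y + t *: u).
Proof.
rewrite /line_poly /mmap /peval mevalE horner_sum; apply: eq_bigr => m _.
rewrite hornerM hornerC /mmap1 horner_prod; congr (_ * _); apply: eq_bigr => i _.
by rewrite horner_exp hornerD hornerC hornerM hornerC hornerX !mxE mulrC.
Qed.

Lemma deriv_line_poly y u p : (line_poly y u p)^`() = line_poly y u (dderiv u p).
Proof.
rewrite /line_poly; elim/mpoly_ringind: p => [c|i|p q IHp IHq|p q IHp IHq].
- by rewrite dderivC mmapC derivC -mpolyC0 mmapC.
- rewrite dderivX !mmapC mmapX mmap1U derivD derivC add0r.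
  by rewrite mul_polyC derivZ derivX alg_polyC.
- by rewrite linearD /= !mmapD derivD IHp IHq.
- by rewrite dderivM mmapD !rmorphM derivM IHp IHq.
Qed.

Lemma derivn_line_poly y u p j :
  (line_poly y u p)^`(j) = line_poly y u (dderivs (nseq j u) p).
Proof. by elim: j => [|j IHj] //; rewrite derivnS IHj deriv_line_poly. Qed.

Section Char0.
Hypothesis hk : [pchar k] =i pred0.

Lemma natr_inj_char0 : injective (fun m : nat => (m%:R : k)).
Proof.
move=> a b /= eq_ab; apply/eqP.
wlog le_ab : a b eq_ab / (a <= b)%N => [wlog_le|].
  by case: (leqP a b) => [|/ltnW] le; [apply: wlog_le | rewrite eq_sym; apply: wlog_le].
by rewrite eqn_leq le_ab -subn_eq0 -(pcharf0P k).1 // natrB // eq_ab subrr eqxx.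
Qed.

Lemma poly_eq0_of_horner (q : {poly k}) : (forall t, q.[t] = 0) -> q = 0.
Proof.
move=> q_eq0; apply/eqP; apply: contraT => q_neq0.
have := max_poly_roots q_neq0 (rs := [seq i%:R | i <- iota 0 (size q)]).
rewrite size_map size_iota ltnn; apply; first by apply/allP => t _; rewrite /root q_eq0.
by rewrite map_inj_uniq ?iota_uniq //; apply: natr_inj_char0.
Qed.

Lemma dderiv_eq0_on_line (p : P) y u :
  (forall t, peval p (y + t *: u) = 0) -> peval (dderiv u p) y = 0.
Proof.
move=> p_eq0; have lp_eq0 : line_poly y u p = 0.
  by apply: poly_eq0_of_horner => t; rewrite horner_line_poly.
have := horner_line_poly y u (dderiv u p) 0.
by rewrite scale0r addr0 -deriv_line_poly lp_eq0 deriv0 horner0.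
Qed.

Lemma taylor_eq0 (p : P) y u :
  (forall j, peval (dderivs (nseq j u) p) y = 0) -> peval p (y + u) = 0.
Proof.
move=> derivs_eq0; rewrite -[u]scale1r -horner_line_poly.
suff -> : line_poly y u p = 0 by rewrite horner0.
apply/polyP => j; rewrite coef0; apply/eqP.
have := horner_line_poly y u (dderivs (nseq j u) p) 0.
rewrite scale0r addr0 derivs_eq0 -derivn_line_poly horner_coef0 coef_derivn addn0.
rewrite ffactnn -mulr_natr => /eqP.
by rewrite mulf_eq0 (pcharf0P k).1 // (negbTE (lt0n_neq0 (fact_gt0 j))) orbF.
Qed.

End Char0.
End Lines.

Section Subspaces.
Variables (k : fieldType) (n : nat).
Local Notation V := 'rV[k]_n.
Local Notation P := {mpoly k[n]}.

Section ClosedPredicate.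
Variable S : V -> Prop.
Hypotheses (S0 : S 0) (SD : forall a b, S a -> S b -> S (a + b))
  (SZ : forall c a, S a -> S (c *: a)).

Lemma subspace_submx m (M : 'M[k]_(m, n)) x :
  (forall i, S (row i M)) -> (x <= M)%MS -> S x.
Proof.
move=> SM /submxP [D ->]; rewrite mulmx_sum_row.
by apply: big_ind => // i _; apply: SZ.
Qed.

Lemma subspace_rowspace : exists A : 'M[k]_n, forall x, S x <-> (x <= A)%MS.
Proof.
pose spans (A : 'M[k]_n) := forall x : V, (x <= A)%MS -> S x.
suff ext d A : spans A -> (n - \rank A < d)%N ->
    exists B : 'M_n, forall x, S x <-> (x <= B)%MS.
  by apply: (ext n.+1 0) => [x|]; [rewrite submx0 => /eqP -> | rewrite ltnS leq_subr].
elim: d A => // d IHd A spansA lt_d.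
have [[x [Sx x_notin]]|S_sub] := classic (exists x, S x /\ ~~ (x <= A)%MS).
  have ltAx : (A < A + x)%MS by rewrite ltmxE addsmxSl addsmx_sub submx_refl.
  apply: (IHd (A + x)%MS).
    move=> y /sub_addsmxP [[u1 u2] /= ->]; apply: SD; first exact/spansA/submxMl.
    by rewrite [u2]mx11_scalar mul_scalar_mx; apply: SZ.
  by have := rank_ltmx ltAx; have := rank_leq_col (A + x)%MS; lia.
exists A => y; split=> [Sy|]; last exact: spansA.
by apply: contraT => y_notin; case: S_sub; exists y.
Qed.

End ClosedPredicate.

Definition lincomb (c : 'cV[k]_n) (G : 'I_n -> P) : P := \sum_i c i 0 *: G i.

Lemma peval_lincomb c G x : peval (lincomb c G) x = (evalmap G x *m c) 0 0.
Proof.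
rewrite peval_sum !mxE; apply: eq_bigr => i _.
by rewrite /peval mevalZ mxE mulrC.
Qed.

Lemma evalmap_submx (A : 'M[k]_n) G x :
  (evalmap G x <= A)%MS <-> forall j, peval (lincomb (col j (cokermx A)) G) x = 0.
Proof.
have eval_comb j :
    peval (lincomb (col j (cokermx A)) G) x = (evalmap G x *m cokermx A) 0 j.
  by rewrite peval_lincomb colE mulmxA -colE mxE.
rewrite submxE; split => [/eqP GA0 j|comb_eq0]; first by rewrite eval_comb GA0 mxE.
by apply/eqP/matrixP => i j; rewrite ord1 [RHS]mxE -eval_comb.
Qed.

Lemma evalmapX (x : V) : evalmap (fun i => 'X_i : P) x = x.
Proof. by apply/rowP => i; rewrite mxE /peval mevalXU. Qed.

Lemma zclosed_submx (A : 'M[k]_n) : zclosed (fun x : V => (x <= A)%MS).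
Proof.
exists (fun p => exists j, p = lincomb (col j (cokermx A)) (fun i => 'X_i)) => x.
rewrite -{1}(evalmapX x) evalmap_submx.
by split => [comb_eq0 _ [j ->] //|comb_eq0 j]; apply: comb_eq0; exists j.
Qed.

Definition evalmx m (Phi : 'I_m -> 'I_n -> P) (x : V) : 'M[k]_(m, n) :=
  \matrix_(i, j) peval (Phi i j) x.

Lemma row_evalmx m (Phi : 'I_m -> 'I_n -> P) i x :
  row i (evalmx Phi x) = evalmap (Phi i) x.
Proof. by apply/rowP => j; rewrite !mxE. Qed.

Lemma det_evalmx_mul_poly m (Phi : 'I_m -> 'I_n -> P) (B : 'M[k]_(n, m)) :
  exists d : P, forall x, peval d x = \det (evalmx Phi x *m B).
Proof.
exists (\det (\matrix_(i, j) \sum_l Phi i l * (B l j)%:MP)) => x.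
rewrite /peval -det_map_mx; congr (\det _); apply/matrixP => i j.
rewrite !mxE rmorph_sum; apply: eq_bigr => l _.
by rewrite rmorphM /= mevalC !mxE.
Qed.

Lemma submx_of_unit_mulmx r p (M : 'M[k]_(r, n)) (A : 'M[k]_(p, n))
    (B : 'M[k]_(n, r)) :
  (M <= A)%MS -> (\rank A <= r)%N -> M *m B \in unitmx -> (A <= M)%MS.
Proof.
move=> MA rkA MB_unit; rewrite -(mxrank_leqif_sup MA) eqn_leq mxrankS //=.
by rewrite (leq_trans rkA) // -{1}(mxrank_unit MB_unit) mxrankM_maxl.
Qed.

End Subspaces.

Section Flatness.
Variables (k : fieldType) (n : nat) (A : 'M[k]_n) (v : 'rV[k]_n).
Local Notation V := 'rV[k]_n.
Local Notation P := {mpoly k[n]}.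
Local Notation inA us := (all (fun u : V => (u <= A)%MS) us).

Definition flat_to (m : nat) (q : P) :=
  forall us : seq V, (size us <= m)%N -> inA us -> peval (dderivs us q) v = 0.

Definition jets_in (F : 'I_n -> P) :=
  forall us : seq V, inA us -> (evalmap (fun i => dderivs us (F i)) v <= A)%MS.

Lemma flat_to_le m m' q : (m <= m')%N -> flat_to m' q -> flat_to m q.
Proof. by move=> le_mm' q_flat us le_us; apply/q_flat/(leq_trans le_us). Qed.

Lemma flat_to_dderiv m u q : (u <= A)%MS -> flat_to m.+1 q -> flat_to m (dderiv u q).
Proof.
move=> uA q_flat us le_us usA; rewrite -dderivs_rcons q_flat ?size_rcons //.
by rewrite all_rcons uA.
Qed.

Lemma jets_in_dderiv u F : (u <= A)%MS -> jets_in F -> jets_in (fun i => dderiv u (F i)).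
Proof.
move=> uA F_jets us usA.
suff -> : evalmap (fun i => dderivs us (dderiv u (F i))) v =
          evalmap (fun i => dderivs (rcons us u) (F i)) v.
  by apply: F_jets; rewrite all_rcons uA.
by apply/rowP => i; rewrite !mxE dderivs_rcons.
Qed.

(* By the Leibniz rule, every term in which a derivative falls on F is, by
   [jets_in F], a derivative of q of order at most [size us] in directions of A. *)
Lemma peval_dderivs_vderiv us F q : inA us -> jets_in F -> flat_to (size us) q ->
  peval (dderivs us (vderiv F q)) v = peval (dderivs us (dderiv (evalmap F v) q)) v.
Proof.
elim: us F q => [|u us IHus] F q; first by rewrite peval_vderiv.
move=> /andP [uA usA] F_jets q_flat /=.
have DuF_v_in : (evalmap (fun i => dderiv u (F i)) v <= A)%MS.
  by apply: (F_jets [:: u]); rewrite /= uA.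
rewrite !dderiv_dderivs dderiv_vderiv [in RHS]dderiv_comm linearD pevalD.
rewrite (IHus _ q usA (jets_in_dderiv uA F_jets) (flat_to_le (leqnSn _) q_flat)).
rewrite (IHus F _ usA F_jets (flat_to_dderiv uA q_flat)).
by rewrite -dderivs_rcons q_flat ?add0r ?size_rcons ?all_rcons ?DuF_v_in.
Qed.

Section Char0.
Hypothesis hk : [pchar k] =i pred0.

Lemma dderivs_eq0_on (r : P) us : (forall x, (x <= A)%MS -> peval r x = 0) ->
  inA us -> forall x, (x <= A)%MS -> peval (dderivs us r) x = 0.
Proof.
move=> r_eq0; elim: us => [|u us IHus] //= /andP [uA usA] x xA.
apply: dderiv_eq0_on_line => // t; apply: IHus => //.
by rewrite addmx_sub // scalemx_sub.
Qed.

Hypothesis vA : (v <= A)%MS.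

Lemma jets_in_of_stable F : (forall x, (x <= A)%MS -> (evalmap F x <= A)%MS) -> jets_in F.
Proof.
move=> F_stable us usA; apply/evalmap_submx => j.
have -> : lincomb (col j (cokermx A)) (fun i => dderivs us (F i)) =
          dderivs us (lincomb (col j (cokermx A)) F).
  by rewrite raddf_sum; apply: eq_bigr => i _; rewrite /= linearZ.
by apply: dderivs_eq0_on => // x /F_stable /evalmap_submx.
Qed.

Variables (I : P -> Prop) (Fam : ('I_n -> P) -> Prop).
Hypotheses (I_v : forall q, I q -> peval q v = 0)
  (I_vderiv : forall F q, Fam F -> I q -> I (vderiv F q))
  (Fam_jets : forall F, Fam F -> jets_in F)
  (Fam_onto : forall u, (u <= A)%MS -> exists2 F, Fam F & evalmap F v = u).

Lemma flat_to_of_invariant m q : I q -> flat_to m q.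
Proof.
elim: m q => [|m IHm] q Iq [|u us] //=; rewrite ?ltnS => le_us; try by rewrite I_v.
move=> /andP [uA usA]; have [F FamF <-] := Fam_onto uA.
have q_flat := flat_to_le le_us (IHm q Iq).
rewrite dderiv_dderivs -(peval_dderivs_vderiv usA (Fam_jets FamF) q_flat).
exact: IHm (I_vderiv FamF Iq) _ le_us usA.
Qed.

Lemma vanish_on_of_invariant q : I q -> forall x, (x <= A)%MS -> peval q x = 0.
Proof.
move=> Iq x xA; rewrite -(subrK v x) addrC; apply: taylor_eq0 => // j.
apply: (flat_to_of_invariant Iq); first by rewrite size_nseq.
by rewrite all_nseq addmx_sub ?eqmx_opp ?orbT.
Qed.

End Char0.
End Flatness.

Section SemigroupOrbits.
Variables (k : fieldType) (n : nat) (E : ('rV[k]_n -> 'rV[k]_n) -> Prop).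
Hypothesis hE : lin_semigroup E.
Local Notation V := 'rV[k]_n.
Local Notation P := {mpoly k[n]}.

Lemma E_evalmap f : E f -> exists F : 'I_n -> P, forall x, evalmap F x = f x.
Proof.
case: hE => polyE _ /polyE [F F_f]; exists F => x.
by apply/rowP => i; rewrite mxE F_f.
Qed.

Lemma E_add f g : E f -> E g -> E (fun x => f x + g x).
Proof. by case: hE => _ [_ [addE _]]; apply: addE. Qed.

Lemma E_scale c f : E f -> E (fun x => c *: f x).
Proof. by case: hE => _ [_ [_ [scaleE _]]]; apply: scaleE. Qed.

Lemma E_id : E id.
Proof. by case: hE => _ [_ [_ [_ []]]]. Qed.

Lemma Eorbit_self v : Eorbit E v v.
Proof. by exists id; split; first exact: E_id. Qed.

Lemma Eorbit0 v : Eorbit E v 0.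
Proof. by case: hE => _ [E0 _]; exists (fun _ => 0). Qed.

Lemma Eorbit_add v a b : Eorbit E v a -> Eorbit E v b -> Eorbit E v (a + b).
Proof.
by move=> [f [Ef <-]] [g [Eg <-]]; exists (fun x => f x + g x); split; first exact: E_add.
Qed.

Lemma Eorbit_scale v c a : Eorbit E v a -> Eorbit E v (c *: a).
Proof. by move=> [f [Ef <-]]; exists (fun x => c *: f x); split; first exact: E_scale. Qed.

Lemma Eorbit_stable v f x : E f -> Eorbit E v x -> Eorbit E v (f x).
Proof.
case: hE => _ [_ [_ [_ [_ compE]]]] Ef [g [Eg <-]].
by exists (f \o g); split; first exact: compE.
Qed.

Lemma Eorbit_trans v w x : Eorbit E v w -> Eorbit E w x -> Eorbit E v x.
Proof. by move=> Ww [f [Ef <-]]; apply: Eorbit_stable. Qed.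

Lemma Eorbit_rowspace v : exists A : 'M[k]_n, forall x, Eorbit E v x <-> (x <= A)%MS.
Proof.
by apply: subspace_rowspace; [apply: Eorbit0 | apply: Eorbit_add | apply: Eorbit_scale].
Qed.

Lemma Eorbit_zclosed v : zclosed (Eorbit E v).
Proof.
have [A W_A] := Eorbit_rowspace v; have [S A_S] := zclosed_submx A.
by exists S => x; rewrite W_A.
Qed.

Lemma Eorbit_DE_at v : set_eq (Eorbit E v) (DE_at E v).
Proof.
move=> x; split => [[f [Ef <-]]|[xi [[f [Ef xi_f]] <-]]]; exists f; split => //.
by exists f.
Qed.

Section Char0.
Hypothesis hk : [pchar k] =i pred0.

Lemma Eorbit_DE_invariant v : DE_invariant E (Eorbit E v).
Proof.
move=> xi y [f [Ef xi_f]] Wy p p_eq0; rewrite pdiffE xi_f.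
apply: dderiv_eq0_on_line => // t; apply: p_eq0.
by apply: Eorbit_add => //; apply/Eorbit_scale/Eorbit_stable.
Qed.

Lemma Eorbit_minimal v Z : zclosed Z -> DE_invariant E Z -> Z v ->
  forall x, Eorbit E v x -> Z x.
Proof.
move=> [S Z_S] Z_inv Zv x; have [A W_A] := Eorbit_rowspace v.
move=> /W_A xA; apply/Z_S => p Sp.
pose I q := forall z, Z z -> peval q z = 0.
pose Fam F := exists2 f, E f & forall x, evalmap F x = f x.
apply: (@vanish_on_of_invariant _ _ A v hk _ I Fam) => //.
- by apply/W_A/Eorbit_self.
- by move=> q Iq; apply: Iq.
- move=> F q [f Ef F_f] Iq z Zz; rewrite peval_vderiv F_f -pdiffE.
  by apply: (Z_inv f) => //; exists f.
- move=> F [f Ef F_f]; apply: jets_in_of_stable => // [|y /W_A yA].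
    by apply/W_A/Eorbit_self.
  by rewrite F_f; apply/W_A/Eorbit_stable.
- move=> u /W_A [f [Ef <-]]; have [F F_f] := E_evalmap Ef.
  by exists F; [exists f | apply: F_f].
- by move=> z /Z_S; apply.
Qed.

Lemma DE_invariant_E_stable Y : zclosed Y -> DE_invariant E Y <-> E_stable E Y.
Proof.
move=> Y_closed; split => [Y_inv f y Ef Yy|Y_stable xi y [f [Ef xi_f]] Yy p p_eq0].
  by apply: (Eorbit_minimal Y_closed Y_inv Yy); exists f.
rewrite pdiffE xi_f; apply: dderiv_eq0_on_line => // t; apply: p_eq0.
by apply: (Y_stable (fun x => x + t *: f x)) => //; apply/E_add/E_scale; first exact: E_id.
Qed.

End Char0.

Lemma Eorbit_locally_constant v : exists U : V -> Prop,
  zopen_in (Eorbit E v) U /\ U v /\ forall w, U w -> set_eq (Eorbit E w) (Eorbit E v).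
Proof.
have [A W_A] := Eorbit_rowspace v.
have /functional_choice [Phi Phi_spec] : forall i : 'I_(\rank A), exists F : 'I_n -> P,
    (exists2 f, E f & forall x, evalmap F x = f x) /\ evalmap F v = row i (row_base A).
  move=> i.
  have /W_A [f [Ef f_v]] : (row i (row_base A) <= A)%MS.
    by apply: (submx_trans (row_sub i _)); rewrite eq_row_base.
  by have [F F_f] := E_evalmap Ef; exists F; split; [exists f | rewrite F_f].
have row_Phi_in w i : Eorbit E w (row i (evalmx Phi w)).
  have [[f Ef F_f] _] := Phi_spec i.
  by rewrite row_evalmx F_f; apply/Eorbit_stable/Eorbit_self.
have Phi_v : evalmx Phi v = row_base A.
  by apply/row_matrixP => i; rewrite row_evalmx (Phi_spec i).2.
have [B baseB] := row_freeP (row_base_free A).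
have [d d_det] := det_evalmx_mul_poly Phi B.
exists (fun w => Eorbit E v w /\ peval d w != 0); split; [|split].
- exists (fun x => peval d x = 0); split.
    by exists (fun p => p = d) => x; split => [dx _ -> // | /(_ d erefl)].
  by move=> x; split=> -[Wx dx]; split=> //; apply/eqP.
- by rewrite d_det Phi_v baseB det1 oner_neq0; split; first exact: Eorbit_self.
move=> w [Ww dw] x; split => [|/W_A xA]; first exact: Eorbit_trans.
apply: (subspace_submx (@Eorbit0 w) (@Eorbit_add w) (@Eorbit_scale w) (row_Phi_in w)).
apply: (submx_trans xA); apply: (submx_of_unit_mulmx _ (leqnn _) (B := B)).
  by apply/row_subP => i; apply/W_A/(Eorbit_trans Ww).
by rewrite unitmxE unitfE -d_det.
Qed.

End SemigroupOrbits.

Theorem lemma3p2p1 (k : closedFieldType) (hk : [pchar k] =i pred0) (n : nat)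
  (E : ('rV[k]_n -> 'rV[k]_n) -> Prop) (hE : lin_semigroup E) :
  (forall v : 'rV[k]_n,
      is_M E v (Eorbit E v) /\ set_eq (Eorbit E v) (DE_at E v))
  /\ (forall Y : 'rV[k]_n -> Prop, zclosed Y -> (DE_invariant E Y <-> E_stable E Y))
  /\ (forall v : 'rV[k]_n, exists U : 'rV[k]_n -> Prop,
        zopen_in (Eorbit E v) U /\ U v /\
        forall w, U w -> set_eq (Eorbit E w) (Eorbit E v)).
Proof.
split; [|split].
- move=> v; split; last exact: Eorbit_DE_at.
  split; [exact: Eorbit_zclosed | exact: Eorbit_DE_invariant | exact: Eorbit_self |].
  by move=> Z; apply: Eorbit_minimal.
- by move=> Y; apply: DE_invariant_E_stable.
- exact: Eorbit_locally_constant.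
Qed.
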